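(* For any graph $G=([n],E)$ with at least one edge, $\kappa(G)=\sup_w \kappa(G,w)$, where the supremum ranges over all vectors $w\in\mathbb{R}^E$ such that $w^Tx\le 1$ is a facet-defining inequality of $\mathrm{CUT}(G)$, taken up to switching (i.e., it suffices to take one representative from each switching class of facet-defining inequalities).
   Context: For a graph $G=([n],E)$ and $w\in\mathbb{R}^E$, let $\mathrm{ip}(G,w)=\max_{x\in\{\pm1\}^n}\sum_{ij\in E}w_{ij}x_ix_j$ and $\mathrm{sdp}(G,w)=\max\sum_{ij\in E}w_{ij}u_i^Tu_j$, the maximum over unit vectors $u_1,\dots,u_n\in\mathbb{R}^n$; $\kappa(G,w)=\mathrm{sdp}(G,w)/\mathrm{ip}(G,w)$ and $\kappa(G)=\sup_{w\in\mathbb{R}^E}\kappa(G,w)$. $\mathrm{CUT}(G)$ is the projection onto the edge coordinates $\mathbb{R}^E$ of $\mathrm{conv}\{xx^T : x\in\{\pm1\}^n\}$; the origin lies in its interior, so its facets can be written as $w^Tx\le 1$. The switching of $w\in\mathbb{R}^E$ by $S\subseteq[n]$ is the vector $w^{(S)}$ with $w^{(S)}_{ij}=-w_{ij}$ if exactly one of $i,j$ lies in $S$, and $w^{(S)}_{ij}=w_{ij}$ otherwise. *)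

From HB Require Import structures.
From mathcomp Require Import all_boot all_order all_algebra.
From mathcomp Require Import all_classical all_reals ereal.
Set Implicit Arguments. Unset Strict Implicit. Unset Printing Implicit Defensive.
Import Order.TTheory GRing.Theory Num.Theory.
Local Open Scope ring_scope.
Local Open Scope classical_set_scope.

Section CutDefs.
Variables (R : realType) (n : nat) (E : {set 'I_n * 'I_n}).

(* Edges: ordered pairs (i,j) with i < j belonging to E (simple graph on [n]).
   The index type of the coordinate space R^E. *)
Definition edge := {e : 'I_n * 'I_n | e \in E}.

Definition pm1 (x : 'I_n -> R) := forall i, x i = 1 \/ x i = -1.

Definition unitvecs (u : 'I_n -> 'I_n -> R) :=
  forall i, \sum_(k < n) u i k ^+ 2 = 1.

Definition dotv (a b : 'I_n -> R) := \sum_(k < n) a k * b k.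

Definition ip (w : edge -> R) : R :=
  sup [set \sum_(e : edge) w e * (x (val e).1 * x (val e).2) | x in pm1].

Definition sdp (w : edge -> R) : R :=
  sup [set \sum_(e : edge) w e * dotv (u (val e).1) (u (val e).2) | u in unitvecs].

Definition kappa (w : edge -> R) : R := sdp w / ip w.

Definition kappaG : \bar R := ereal_sup [set (kappa w)%:E | w in [set: edge -> R]].

(* the vertex x x^T projected on the edge coordinates *)
Definition cutvec (x : 'I_n -> R) : edge -> R :=
  fun e => x (val e).1 * x (val e).2.

Definition CUT : set (edge -> R) :=
  [set y | exists (k : nat) (lam : 'I_k -> R) (xs : 'I_k -> 'I_n -> R),
      [/\ forall i, 0 <= lam i, \sum_(i < k) lam i = 1, forall i, pm1 (xs i)
        & forall e, y e = \sum_(i < k) lam i * cutvec (xs i) e]].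

Definition linf (w y : edge -> R) : R := \sum_(e : edge) w e * y e.

Definition aff_indep (k : nat) (p : 'I_k -> edge -> R) :=
  forall c : 'I_k -> R, \sum_(i < k) c i = 0 ->
    (forall e, \sum_(i < k) c i * p i e = 0) -> forall i, c i = 0.

(* w^T y <= 1 is facet-defining for CUT(G): it is valid, and the face
   {y in CUT(G) | w^T y = 1} has dimension |E| - 1 (it contains |E| affinely
   independent points; it cannot contain more since it lies in a hyperplane). *)
Definition facet (w : edge -> R) :=
  (forall y, CUT y -> linf w y <= 1) /\
  exists p : 'I_#|{: edge}| -> edge -> R,
    (forall i, CUT (p i) /\ linf w (p i) = 1) /\ aff_indep p.

Definition switch (S : {set 'I_n}) (w : edge -> R) : edge -> R :=
  fun e => if ((val e).1 \in S) != ((val e).2 \in S) then - w e else w e.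

End CutDefs.

From mathcomp Require Import all_boot all_order all_algebra.
From mathcomp Require Import all_classical all_reals ereal.
From mathcomp Require Import zify ring lra.
Import Order.TTheory GRing.Theory Num.Theory.
Set Implicit Arguments. Unset Strict Implicit. Unset Printing Implicit Defensive.
Local Open Scope ring_scope.

(* The ratio kappa(G,w) is invariant under switching and under positive scaling of w,
   and ip(w) >= 0.  So it suffices to consider w with ip(w) = 1, i.e. w in the polar
   P = {c | c . cutvec x <= 1 for every sign vector x}, on which kappa(w) <= sdp(w).
   The cut vectors sum to 0 (flip one endpoint) and are orthogonal (two distinct edges are
   separated by a vertex), hence P is a pointed polytope.  sdp is convex, so from any
   point of P one can move in both directions along a direction orthogonal to all tight
   constraints until a new constraint becomes tight without decreasing sdp: sdp is
   maximised at a vertex c of P.  A vertex has |E| linearly independent tight cut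
   vectors, so c^T y <= 1 is a facet of CUT(G) with ip(c) = 1 and kappa(c) = sdp(c);
   switching it into Rep leaves kappa unchanged. *)

Section ConvexMaxAtVertex.
Variables (R : realType) (V : finType) (d : nat) (p : V -> 'I_d -> R).

Definition pdot v (c : 'I_d -> R) := \sum_j p v j * c j.
Definition feasible c := forall v, pdot v c <= 1.
Definition shift (c z : 'I_d -> R) t j := c j + t * z j.
Definition slack c := [set v | pdot v c != 1].
Definition tight_mx c : 'M[R]_(#|V|, d) :=
  \matrix_(k, j) if pdot (enum_val k) c == 1 then p (enum_val k) j else 0.
Definition vertex f := feasible f /\ exists M : 'M[R]_d, row_free M /\
  forall i, exists v, pdot v f = 1 /\ forall j, M i j = p v j.

Lemma pdot_shift v c z t : pdot v (shift c z t) = pdot v c + t * pdot v z.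
Proof.
rewrite /pdot /shift mulr_sumr -big_split /=; apply: eq_bigr => j _.
by rewrite mulrDr mulrCA.
Qed.

Lemma pdotN v z : pdot v (fun j => - z j) = - pdot v z.
Proof. by rewrite /pdot -sumrN; apply: eq_bigr => j _; rewrite mulrN. Qed.

Lemma row_full_tight_vertex c : feasible c -> row_full (tight_mx c) -> vertex c.
Proof.
move=> Hc Hf; split=> //.
exists (rowsub (fullrankfun Hf) (tight_mx c)); split; first exact: fullrowsub_free.
move=> i; set v := enum_val (fullrankfun Hf i); exists v.
have [Ht|Hnt] := eqVneq (pdot v c) 1.
  by split=> // j; rewrite !mxE Ht eqxx.
set M := rowsub (fullrankfun Hf) (tight_mx c).
have Hrow0 : delta_mx 0 i *m M = 0 *m M :> 'M_(1, d).
  by rewrite mul0mx -rowE; apply/rowP => j; rewrite !mxE (negbTE Hnt).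
move: (row_free_inj (fullrowsub_free Hf : row_free M) Hrow0) => /matrixP /(_ 0 i).
by rewrite !mxE !eqxx => /eqP; rewrite oner_eq0.
Qed.

Hypothesis sum_p_eq0 : forall j, \sum_v p v j = 0.

Lemma sum_pdot_eq0 z : \sum_v pdot v z = 0.
Proof.
rewrite /pdot exchange_big /= big1 // => j _.
by rewrite -mulr_suml sum_p_eq0 mul0r.
Qed.

Lemma pdot_gt0_exists z : (exists v, pdot v z != 0) -> exists v, 0 < pdot v z.
Proof.
move=> [v0 Hv0]; apply/not_existsP => Hneg.
have Hle v : 0 <= - pdot v z by rewrite oppr_ge0 leNgt; apply/negP => /(Hneg v).
have : \sum_v - pdot v z = 0 by rewrite sumrN sum_pdot_eq0 oppr0.
move/psumr_eq0P => /(_ (fun v _ => Hle v)) /(_ v0 isT) /eqP.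
by rewrite oppr_eq0 (negbTE Hv0).
Qed.

Lemma slide_to_tight c z v0 : feasible c -> (forall v, pdot v c = 1 -> pdot v z = 0) ->
  0 < pdot v0 z -> exists2 t, 0 < t &
  feasible (shift c z t) /\ (#|slack (shift c z t)| < #|slack c|)%N.
Proof.
move=> Hc Hz Hv0.
pose P v := 0 < pdot v z.
pose step v := (1 - pdot v c) / pdot v z.
have slackP v : P v -> pdot v c < 1.
  move=> Pv; rewrite lt_neqAle Hc andbT; apply/eqP => /Hz Hz0.
  by move: Pv; rewrite /P Hz0 ltxx.
(* ratio test: v1 is the first constraint to become tight along z *)
case: (@arg_minP _ _ V v0 P step Hv0) => v1 Pv1 Hmin.
have step_gt0 : 0 < step v1 by rewrite divr_gt0 // subr_gt0 slackP.
exists (step v1) => //; split.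
  move=> v; rewrite pdot_shift; have [Pv|] := ltP 0 (pdot v z).
    rewrite -lerBrDl -[leRHS](divfK (lt0r_neq0 Pv)) ler_wpM2r ?(ltW Pv) //.
    exact: Hmin.
  by move=> Hv; apply: le_trans (Hc v); rewrite gerDl mulr_ge0_le0 // ltW.
apply: proper_card; apply/properP; split.
  apply/fintype.subsetP => v; rewrite !inE; apply: contra => /eqP Hv.
  by rewrite pdot_shift Hv (Hz v Hv) mulr0 addr0.
exists v1; rewrite !inE ?negbK; first by rewrite lt_eqF // slackP.
by rewrite pdot_shift /step (divfK (lt0r_neq0 Pv1)) addrC subrK.
Qed.

Hypothesis p_span : forall z, (forall v, pdot v z = 0) -> forall j, z j = 0.

Lemma tight_kernel_dir c : ~~ row_full (tight_mx c) ->
  exists z, (forall v, pdot v c = 1 -> pdot v z = 0) /\ exists v, pdot v z != 0.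
Proof.
move=> Hnf; set K := kermx (tight_mx c)^T.
have /matrix0Pn [i [j0 Hij]] : K != 0.
  rewrite -mxrank_eq0 mxrank_ker mxrank_tr; move: Hnf; rewrite /row_full.
  have := rank_leq_col (tight_mx c); rewrite -subn_eq0; lia.
exists (fun j => K i j); split.
  move=> v Hv; move: (mulmx_ker (tight_mx c)^T) => /matrixP /(_ i (enum_rank v)).
  rewrite !mxE => <-; apply: eq_bigr => j _.
  by rewrite !mxE enum_rankK Hv eqxx mulrC.
apply/not_existsP => Hz; move/eqP: Hij; apply.
by apply: p_span => v; apply/eqP/negbNE/negP; exact: Hz.
Qed.

Variable F : ('I_d -> R) -> R.
Hypothesis F_convex : forall (a b : 'I_d -> R) (l : R), 0 <= l -> l <= 1 ->
  F (fun j => l * a j + (1 - l) * b j) <= l * F a + (1 - l) * F b.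

Lemma feasible_improve c : feasible c -> ~~ row_full (tight_mx c) ->
  exists c', [/\ feasible c', (#|slack c'| < #|slack c|)%N & F c <= F c'].
Proof.
move=> Hc Hnf; have [z [Hz Hnz]] := tight_kernel_dir Hnf.
pose mz j := - z j.
have Hmz v : pdot v c = 1 -> pdot v mz = 0 by move=> /Hz; rewrite pdotN => ->; rewrite oppr0.
have [v1 Hv1] := pdot_gt0_exists Hnz.
have [v2 Hv2] : exists v, 0 < pdot v mz.
  by apply: pdot_gt0_exists; case: Hnz => v Hv; exists v; rewrite pdotN oppr_eq0.
have [t1 t1_gt0 [Hc1 Hs1]] := slide_to_tight Hc Hz Hv1.
have [t2 t2_gt0 [Hc2 Hs2]] := slide_to_tight Hc Hmz Hv2.
set l := t2 / (t1 + t2).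
have l_ge0 : 0 <= l by rewrite divr_ge0 // ltW // addr_gt0.
have l_le1 : l <= 1 by rewrite ler_pdivrMr ?addr_gt0 // mul1r lerDr ltW.
have c_mid : c = (fun j => l * shift c z t1 j + (1 - l) * shift c mz t2 j).
  apply/funext => j; rewrite /l /shift /mz; field.
  by rewrite lt0r_neq0 // addr_gt0.
have := F_convex (shift c z t1) (shift c mz t2) l_ge0 l_le1; rewrite -c_mid => HF.
have [Hle|Hlt] := leP (F (shift c z t1)) (F (shift c mz t2)).
  by exists (shift c mz t2); split=> //; apply: le_trans HF _; nra.
by exists (shift c z t1); split=> //; apply: le_trans HF _; nra.
Qed.

Lemma convex_max_at_vertex c : feasible c -> exists2 f, vertex f & F c <= F f.
Proof.
have [m Hm] := ubnP #|slack c|; elim: m c Hm => // m IHm c Hm Hc.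
have [Hf|Hnf] := boolP (row_full (tight_mx c)).
  by exists c => //; exact: row_full_tight_vertex.
have [c' [Hc' Hlt HF]] := feasible_improve Hc Hnf.
have [f Hvf HFf] := IHm c' (leq_trans Hlt Hm) Hc'.
by exists f => //; apply: le_trans HF HFf.
Qed.
End ConvexMaxAtVertex.

Section CutPolytope.
Variables (R : realType) (n : nat) (E : {set 'I_n * 'I_n}).
Implicit Types (w : edge E -> R) (x : 'I_n -> R) (u : 'I_n -> 'I_n -> R).

Lemma pm1_norm x i : pm1 x -> `|x i| = 1.
Proof. by move=> /(_ i) [] ->; rewrite ?normrN normr1. Qed.

Lemma ip_has_sup w :
  has_sup [set \sum_(e : edge E) w e * (x (val e).1 * x (val e).2) | x in @pm1 R n].
Proof.
split; first by eexists; exists (fun _ => 1) => //; left.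
exists (\sum_e `|w e|) => _ [x Hx <-]; apply: ler_sum => e _.
by apply: le_trans (ler_norm _) _; rewrite !normrM !pm1_norm // !mulr1.
Qed.

Lemma cut_le_ip w x : pm1 x -> linf w (cutvec x) <= ip w.
Proof. by move=> Hx; apply: sup_upper_bound (ip_has_sup w) _ _; exists x. Qed.

Lemma ip_le w M : (forall x, pm1 x -> linf w (cutvec x) <= M) -> ip w <= M.
Proof. by move=> H; apply: ge_sup (ip_has_sup w).1 _ => _ [x Hx <-]; apply: H. Qed.

Lemma normr_dotv_le1 u a b : unitvecs u -> `|dotv (u a) (u b)| <= 1.
Proof.
move=> Hu.
have sum_sq (s : R) : \sum_k (u a k + s * u b k) ^+ 2 = 1 + s ^+ 2 + 2 * s * dotv (u a) (u b).
  rewrite (eq_bigr (fun k => u a k ^+ 2 + s ^+ 2 * u b k ^+ 2 + 2 * s * (u a k * u b k))).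
    by rewrite !big_split /= -!mulr_sumr !Hu mulr1.
  by move=> k _; ring.
have sq_ge0 (s : R) : 0 <= \sum_k (u a k + s * u b k) ^+ 2.
  by apply: sumr_ge0 => k _; exact: sqr_ge0.
have := sq_ge0 1; have := sq_ge0 (-1); rewrite !sum_sq.
rewrite ler_norml; move=> H1 H2; apply/andP; split; nra.
Qed.

Hypothesis n_gt0 : (0 < n)%N.

Definition embed_pm1 x : 'I_n -> 'I_n -> R :=
  fun i k => if val k == 0%N then x i else 0.

Lemma dotv_embed_pm1 x a b : dotv (embed_pm1 x a) (embed_pm1 x b) = x a * x b.
Proof.
rewrite /dotv (bigD1 (Ordinal n_gt0)) //= big1 ?addr0 // => k Hk.
by rewrite /embed_pm1 ifF ?mul0r //; apply: contraNF Hk => /eqP Hk0; apply/eqP/val_inj.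
Qed.

Lemma embed_pm1_unit x : pm1 x -> unitvecs (embed_pm1 x).
Proof.
move=> Hx i; rewrite (bigD1 (Ordinal n_gt0)) //= big1 ?addr0.
  by rewrite /embed_pm1 /=; case: (Hx i) => ->; rewrite ?sqrrN expr1n.
move=> k Hk; rewrite /embed_pm1 ifF ?expr0n //.
by apply: contraNF Hk => /eqP Hk0; apply/eqP/val_inj.
Qed.

Lemma sdp_has_sup w :
  has_sup [set \sum_(e : edge E) w e * dotv (u (val e).1) (u (val e).2) | u in @unitvecs R n].
Proof.
split.
  by eexists; exists (embed_pm1 (fun _ => 1)) => //; apply: embed_pm1_unit; left.
exists (\sum_e `|w e|) => _ [u Hu <-]; apply: ler_sum => e _.
apply: le_trans (ler_norm _) _; rewrite normrM -[leRHS]mulr1.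
by apply: ler_wpM2l => //; exact: normr_dotv_le1.
Qed.

Lemma sdp_ge w u : unitvecs u ->
  \sum_(e : edge E) w e * dotv (u (val e).1) (u (val e).2) <= sdp w.
Proof. by move=> Hu; apply: sup_upper_bound (sdp_has_sup w) _ _; exists u. Qed.

Lemma sdp_le w M :
  (forall u, unitvecs u -> \sum_(e : edge E) w e * dotv (u (val e).1) (u (val e).2) <= M) ->
  sdp w <= M.
Proof. by move=> H; apply: ge_sup (sdp_has_sup w).1 _ => _ [u Hu <-]; apply: H. Qed.

Lemma cut_le_sdp w x : pm1 x -> linf w (cutvec x) <= sdp w.
Proof.
move=> Hx; apply: le_trans (sdp_ge w (embed_pm1_unit Hx)).
by under [leRHS]eq_bigr do rewrite dotv_embed_pm1.
Qed.

Lemma ip_le_sdp w : ip w <= sdp w.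
Proof. by apply: ip_le => x; exact: cut_le_sdp. Qed.

Definition sgn (S : {set 'I_n}) (i : 'I_n) : R := if i \in S then -1 else 1.

Lemma sgn_mulss S i : sgn S i * sgn S i = 1.
Proof. by rewrite /sgn; case: (i \in S); rewrite ?mulrNN mulr1. Qed.

Lemma pm1_sgn_mul S x : pm1 x -> pm1 (fun i => sgn S i * x i).
Proof.
move=> Hx i; rewrite /sgn.
by case: (i \in S); case: (Hx i) => ->; rewrite ?mulN1r ?mul1r ?opprK; auto.
Qed.

Lemma switchE S w e : switch S w e = sgn S (val e).1 * sgn S (val e).2 * w e.
Proof.
by rewrite /switch /sgn; case: ((val e).1 \in S); case: ((val e).2 \in S) => /=; ring.
Qed.

Lemma switchK S : involutive (@switch R n E S).
Proof. by move=> w; apply/funext => e; rewrite /switch; case: (_ != _); rewrite ?opprK. Qed.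

Lemma switch_sgn_sum S w (a b : edge E -> R) :
  (forall e, b e = sgn S (val e).1 * sgn S (val e).2 * a e) ->
  \sum_(e : edge E) switch S w e * b e = \sum_(e : edge E) w e * a e.
Proof.
move=> Hb; apply: eq_bigr => e _; rewrite switchE Hb.
set s1 := sgn S _; set s2 := sgn S _.
transitivity ((s1 * s1) * (s2 * s2) * (w e * a e)); first by ring.
by rewrite !sgn_mulss !mul1r.
Qed.

Lemma ip_switch_le S w : ip w <= ip (switch S w).
Proof.
apply: ip_le => x Hx.
apply: le_trans (cut_le_ip (switch S w) (pm1_sgn_mul S Hx)).
rewrite /linf (@switch_sgn_sum S w (cutvec x)) //.
by move=> e; rewrite /cutvec; ring.
Qed.

Lemma sdp_switch_le S w : sdp w <= sdp (switch S w).
Proof.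
apply: sdp_le => u Hu.
have Hu' : unitvecs (fun i k => sgn S i * u i k).
  move=> i; rewrite -(Hu i); apply: eq_bigr => k _.
  by rewrite exprMn /sgn; case: (i \in S); rewrite ?sqrrN expr1n mul1r.
apply: le_trans (sdp_ge (switch S w) Hu').
rewrite (@switch_sgn_sum S w (fun e => dotv (u (val e).1) (u (val e).2))) // => e.
by rewrite /dotv mulr_sumr; apply: eq_bigr => k _; ring.
Qed.

Lemma kappa_switch S w : kappa (switch S w) = kappa w.
Proof.
have Hip : ip (switch S w) = ip w.
  by apply/le_anti; rewrite ip_switch_le -{2}(switchK S w) ip_switch_le.
have Hsdp : sdp (switch S w) = sdp w.
  by apply/le_anti; rewrite sdp_switch_le -{2}(switchK S w) sdp_switch_le.
by rewrite /kappa Hip Hsdp.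
Qed.

Local Notation V := {ffun 'I_n -> bool}.
Local Notation d := #|{: edge E}|.

Definition signs (f : V) i : R := if f i then -1 else 1.
Definition cutpt (f : V) (j : 'I_d) : R := cutvec (signs f) (enum_val j).
Definition flip (a : 'I_n) (f : V) : V := [ffun i => if i == a then ~~ f i else f i].

Lemma signs_pm1 f : pm1 (signs f).
Proof. by move=> i; rewrite /signs; case: (f i); [right|left]. Qed.

Lemma signs_mulss f i : signs f i * signs f i = 1.
Proof. by rewrite /signs; case: (f i); rewrite ?mulrNN mulr1. Qed.

Lemma flipK a : involutive (flip a).
Proof. by move=> f; apply/ffunP => i; rewrite !ffunE; case: (i == a); rewrite ?negbK. Qed.

Lemma signs_flip a f i : signs (flip a f) i = if i == a then - signs f i else signs f i.
Proof. by rewrite /signs ffunE; case: (i == a) => //; case: (f i); rewrite ?opprK. Qed.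

Lemma sum_flip_odd a (g : V -> R) : (forall f, g (flip a f) = - g f) -> \sum_f g f = 0.
Proof.
move=> Hg; have : \sum_f g f = - \sum_f g f.
  by rewrite {1}(reindex_inj (can_inj (flipK a))) -sumrN; apply: eq_bigr.
by move/eqP; rewrite -subr_eq0 opprK -mulr2n mulrn_eq0 => /eqP.
Qed.

Hypothesis HE : forall e, e \in E -> (e.1 < e.2)%N.

Lemma edge_lt (e : edge E) : ((val e).1 < (val e).2)%N.
Proof. by apply: HE; case: e. Qed.

Definition incident (c : 'I_n) (e : edge E) := ((val e).1 == c) || ((val e).2 == c).

Lemma cutvec_flip c f (e : edge E) :
  cutvec (signs (flip c f)) e = (-1) ^+ incident c e * cutvec (signs f) e.
Proof.
have Hne : (val e).1 != (val e).2 by rewrite neq_ltn edge_lt.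
rewrite /cutvec /incident !signs_flip.
case: ((val e).1 =P c) => [Ha|_]; case: ((val e).2 =P c) => [Hb|_] /=; try ring.
by move: Hne; rewrite Ha Hb eqxx.
Qed.

Lemma sum_cutpt_eq0 j : \sum_f cutpt f j = 0.
Proof.
apply: (@sum_flip_odd (val (enum_val j)).1) => f.
by rewrite /cutpt cutvec_flip /incident eqxx expr1 mulN1r.
Qed.

Lemma separating_vertex (e e0 : edge E) : e != e0 -> exists c, incident c e != incident c e0.
Proof.
move=> Hne; rewrite /incident.
have := edge_lt e; have := edge_lt e0.
case: e Hne => [[a b] He] /=; case: e0 => [[a0 b0] He0] /= Hne Hab0 Hab.
have Hne' : (a, b) != (a0, b0) by apply: contraNneq Hne => Heq; apply/eqP/val_inj.
have [/orP[/eqP Ha|/eqP Ha]|Ha] := boolP ((a0 == a) || (b0 == a)).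
- exists b; rewrite eqxx orbT /= negb_or; apply/andP; split.
    by apply/eqP => Hb; move: Hab; rewrite -Hb Ha ltnn.
  by apply: contraNneq Hne' => Hb; rewrite Hb Ha.
- exists a0; rewrite eqxx; apply/negP => /eqP /orP [] /eqP Ha0.
    by move: Hab0; rewrite Ha -Ha0 ltnn.
  by move: Hab0 Hab; rewrite Ha Ha0; lia.
- by exists a; rewrite eqxx (negbTE Ha).
Qed.

Lemma card_signs_gt0 : (0 < #|{: V}|)%N.
Proof. by apply/card_gt0P; exists [ffun _ => false]. Qed.

Lemma sum_cutpt_mul j j0 :
  \sum_f cutpt f j0 * cutpt f j = if j == j0 then #|{: V}|%:R else 0.
Proof.
have [->|Hne] := eqVneq j j0.
  rewrite -sum1_card natr_sum; apply: eq_bigr => f _.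
  by rewrite /cutpt /cutvec mulrACA !signs_mulss mulr1.
have [c Hc] : exists c, incident c (enum_val j0) != incident c (enum_val j).
  by apply: separating_vertex; apply: contra Hne => /eqP/enum_val_inj ->.
apply: (@sum_flip_odd c) => f; rewrite /cutpt !cutvec_flip.
by move: Hc; case: (incident c _); case: (incident c _) => //= _; ring.
Qed.

Lemma cutpt_span (z : 'I_d -> R) : (forall f, pdot cutpt f z = 0) -> forall j, z j = 0.
Proof.
move=> Hz j0.
have : \sum_f cutpt f j0 * pdot cutpt f z = 0 by rewrite big1 // => f _; rewrite Hz mulr0.
rewrite /pdot; under eq_bigr do rewrite mulr_sumr; rewrite exchange_big /=.
have Hj j : \sum_f cutpt f j0 * (cutpt f j * z j) = (if j == j0 then #|{: V}|%:R else 0) * z j.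
  by rewrite -sum_cutpt_mul mulr_suml; apply: eq_bigr => f _; rewrite mulrA.
under eq_bigr do rewrite Hj.
rewrite (bigD1 j0) //= eqxx big1 ?addr0 => [|j /negbTE ->]; last by rewrite mul0r.
by move/eqP; rewrite mulf_eq0 pnatr_eq0 eqn0Ngt card_signs_gt0 => /eqP.
Qed.

Definition coords w : 'I_d -> R := fun j => w (enum_val j).
Definition of_coords (c : 'I_d -> R) : edge E -> R := fun e => c (enum_rank e).

Lemma of_coordsK : cancel coords of_coords.
Proof. by move=> w; apply/funext => e; rewrite /of_coords /coords enum_rankK. Qed.

Lemma coordsK : cancel of_coords coords.
Proof. by move=> c; apply/funext => j; rewrite /of_coords /coords enum_valK. Qed.

Lemma pdot_coords f w : pdot cutpt f (coords w) = linf w (cutvec (signs f)).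
Proof.
rewrite /pdot /linf /coords /cutpt [RHS](reindex (@enum_val _ (mem {: edge E}))) /=.
  by apply: eq_bigr => j _; rewrite mulrC.
by exists (@enum_rank _) => e _; [exact: enum_valK | exact: enum_rankK].
Qed.

Definition signs_of x : V := [ffun i => x i == -1].

Lemma signs_ofK x : pm1 x -> signs (signs_of x) = x.
Proof.
move=> Hx; apply/funext => i; rewrite /signs ffunE.
by case: (Hx i) => ->; rewrite ?eqxx // ifF //; apply/eqP => H; lra.
Qed.

Lemma ip_le_feasible c : feasible cutpt c -> ip (of_coords c) <= 1.
Proof.
move=> Hc; apply: ip_le => x Hx.
by rewrite -(signs_ofK Hx) -pdot_coords coordsK.
Qed.

Lemma linf_le_ip w y : CUT y -> linf w y <= ip w.
Proof.
move=> [k [lam [xs [lam_ge0 lam_sum1 xs_pm1 Hy]]]].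
have -> : linf w y = \sum_(i < k) lam i * linf w (cutvec (xs i)).
  rewrite /linf; under eq_bigr do rewrite Hy mulr_sumr.
  rewrite exchange_big /=; apply: eq_bigr => i _; rewrite mulr_sumr.
  by apply: eq_bigr => e _; rewrite mulrCA.
rewrite -[leRHS]mul1r -lam_sum1 mulr_suml; apply: ler_sum => i _.
by apply: ler_wpM2l => //; exact: cut_le_ip.
Qed.

Lemma sdp_convex (a b : edge E -> R) l : 0 <= l -> l <= 1 ->
  sdp (fun e => l * a e + (1 - l) * b e) <= l * sdp a + (1 - l) * sdp b.
Proof.
move=> l_ge0 l_le1; apply: sdp_le => u Hu.
pose D (e : edge E) := dotv (u (val e).1) (u (val e).2).
rewrite (eq_bigr (fun e => l * (a e * D e) + (1 - l) * (b e * D e))); last first.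
  by move=> e _; rewrite /D; ring.
rewrite big_split /= -!mulr_sumr lerD // ler_wpM2l ?subr_ge0 //; exact: sdp_ge.
Qed.

Lemma sdp_scale_le t w : 0 <= t -> sdp (fun e => t * w e) <= t * sdp w.
Proof.
move=> t_ge0; apply: sdp_le => u Hu.
under eq_bigr do rewrite -mulrA; rewrite -mulr_sumr.
by apply: ler_wpM2l => //; exact: sdp_ge.
Qed.

Lemma ip_ge0 w : 0 <= ip w.
Proof.
(* the cut values of w average to 0 over all sign vectors *)
have cardV_gt0 : 0 < #|{: V}|%:R :> R by rewrite ltr0n card_signs_gt0.
rewrite -(pmulr_rge0 _ cardV_gt0) -sum1_card natr_sum mulr_suml.
rewrite -[leLHS](sum_pdot_eq0 sum_cutpt_eq0 (coords w)); apply: ler_sum => f _.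
by rewrite mul1r pdot_coords; exact: cut_le_ip (signs_pm1 f).
Qed.

Hypothesis d_gt0 : (0 < d)%N.

Lemma vertex_facet c : vertex cutpt c -> facet (of_coords c) /\ ip (of_coords c) = 1.
Proof.
move=> [Hc [M [M_free M_tight]]].
have tight_pts i : exists f, linf (of_coords c) (cutvec (signs f)) = 1 /\
    (fun e : edge E => M i (enum_rank e)) = cutvec (signs f).
  have [f [Hf HM]] := M_tight i; exists f; split; first by rewrite -pdot_coords coordsK.
  by apply/funext => e; rewrite HM /cutpt enum_rankK.
have ip1 : ip (of_coords c) = 1.
  have [f [Hf _]] := tight_pts (Ordinal d_gt0).
  apply/le_anti; rewrite ip_le_feasible //= -[leLHS]Hf; exact: cut_le_ip (signs_pm1 f).
split=> //; split; first by move=> y Hy; rewrite -ip1; exact: linf_le_ip.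
exists (fun i (e : edge E) => M i (enum_rank e)); split.
  move=> i; have [f [Hf ->]] := tight_pts i; split=> //.
  exists 1%N, (fun _ => 1), (fun _ => signs f); split=> //.
  - by rewrite big_ord1.
  - by move=> _; exact: signs_pm1.
  - by move=> e; rewrite big_ord1 mul1r.
move=> a _ Ha i.
have Hrow : (\row_i a i : 'rV[R]_d) *m M = 0 *m M.
  rewrite mul0mx; apply/rowP => j; rewrite !mxE -[RHS](Ha (enum_val j)).
  by apply: eq_bigr => k _; rewrite mxE enum_valK.
by move: (row_free_inj M_free Hrow) => /rowP /(_ i); rewrite !mxE.
Qed.

Lemma vertex_above c : feasible cutpt c ->
  exists2 f, vertex cutpt f & sdp (of_coords c) <= sdp (of_coords f).
Proof.
apply: (convex_max_at_vertex sum_cutpt_eq0 cutpt_span (F := fun c => sdp (of_coords c))).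
by move=> a b l; exact: sdp_convex.
Qed.

Lemma feasible_normalized w : 0 < ip w -> feasible cutpt (coords (fun e => w e / ip w)).
Proof.
move=> ip_gt0 f; rewrite pdot_coords /linf.
under eq_bigr do rewrite mulrAC; rewrite -mulr_suml ler_pdivrMr // mul1r.
exact: cut_le_ip (signs_pm1 f).
Qed.

Lemma kappa_le_normalized w : 0 < ip w -> kappa w <= sdp (fun e => w e / ip w).
Proof.
move=> ip_gt0; rewrite /kappa ler_pdivrMr // mulrC.
have -> : sdp w = sdp (fun e => ip w * (w e / ip w)).
  by congr sdp; apply/funext => e; rewrite mulrCA divff ?mulr1 // gt_eqF.
exact/sdp_scale_le/ltW.
Qed.

Lemma facet_dominating w : exists g : edge E -> R, [/\ facet g, ip g = 1 & kappa w <= sdp g].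
Proof.
have [ip0|ip_gt0] : ip w = 0 \/ 0 < ip w.
  by case: (ltgtP 0 (ip w)) (ip_ge0 w) => [|//|->]; [right|left].
- have feasible0 : feasible cutpt (fun _ => 0).
    by move=> f; rewrite /pdot big1 ?ler01 // => j _; rewrite mulr0.
  have [f /vertex_facet [Hfacet ip1] _] := vertex_above feasible0.
  exists (of_coords f); split=> //.
  by rewrite /kappa ip0 invr0 mulr0 (le_trans (ip_ge0 _) (ip_le_sdp _)).
- have [f /vertex_facet [Hfacet ip1] Hf] := vertex_above (feasible_normalized ip_gt0).
  exists (of_coords f); split=> //.
  by rewrite of_coordsK in Hf; apply: le_trans (kappa_le_normalized ip_gt0) Hf.
Qed.

End CutPolytope.

Local Open Scope classical_set_scope.
Unset Implicit Arguments.

Theorem mainTheorem2 (R : realType) (n : nat) (E : {set 'I_n * 'I_n})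
  (HE : forall e, e \in E -> (e.1 < e.2)%N) (Hne : E != finset.set0)
  (Rep : set (edge E -> R))
  (Hfacet : forall w, Rep w -> facet w)
  (Hcover : forall w, facet w -> exists S : {set 'I_n}, Rep (switch S w)) :
  kappaG R E = ereal_sup [set (kappa w)%:E | w in Rep].
Proof.
have [e0 He0] := set0Pn _ Hne.
have n_gt0 : (0 < n)%N := leq_ltn_trans (leq0n _) (ltn_ord e0.1).
have d_gt0 : (0 < #|{: edge E}|)%N by apply/card_gt0P; exists (exist _ e0 He0).
apply/eqP; rewrite eq_le; apply/andP; split; last first.
  by apply: ereal_sup_le => _ [w Hw <-]; exists w.
apply: ge_ereal_sup => _ [w _ <-].
have [g [Hg ip1 Hkg]] := facet_dominating n_gt0 HE d_gt0 w.
have [S HS] := Hcover g Hg.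
apply: le_ereal_sup_tmp; exists (kappa (switch S g))%:E; first by exists (switch S g).
by rewrite lee_fin (kappa_switch n_gt0) [kappa g]/kappa ip1 divr1.
Qed.
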